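(* Assume $\mathscr{R}_0>\frac{\sigma_m(\mu+r)C_I}{\mu\beta}$ (equivalently $C_I<\frac{\beta A}{(\mu+r)(\mu+\beta+\rho)}$) and $$C_I\le\frac{\mu^2}{\mu+r}\left(\sqrt{\frac{\beta}{\mu\sigma_m}+\frac{1}{\sigma_s}}-\sqrt{\frac{1}{\sigma_s}}\right)^2.$$ Then, with $K=1+\frac{\sigma_m(\mu+r)}{\mu\beta}C_I$: if $(\sqrt p+\sqrt q)^2\le\mathscr{R}_0\le1$, $E^*$ is not an endemic equilibrium but $E_1^*$ and $E_2^*$ are; if $1<\mathscr{R}_0<K$, all of $E^*,E_1^*,E_2^*$ are endemic equilibria; if $\mathscr{R}_0=K$, $E^*$ and $E_1^*$ are endemic equilibria but $E_2^*$ is not; if $\mathscr{R}_0>K$, $E_1^*$ is the unique endemic equilibrium.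
   Context: Let $A,\sigma_m,\sigma_s,\mu,\rho,\beta,r,C_I$ be positive constants. Write $[x]^+=\max\{0,x\}$ and $T(I_s)=rI_s$ if $I_s<C_I$, $T(I_s)=rC_I$ if $I_s\ge C_I$. System (3) is $$S'=A-\sigma_mSI_m-\sigma_sS[I_s-C_I]^+-\mu S,\quad I_m'=\sigma_mSI_m+\sigma_sS[I_s-C_I]^+-(\mu+\rho+\beta)I_m,\quad I_s'=\beta I_m-T(I_s)-\mu I_s.$$ $\mathscr{R}_0=\frac{A\sigma_m}{\mu(\mu+\beta+\rho)}$. An endemic equilibrium is an equilibrium of (3) with $S,I_m,I_s>0$. $E^*=(S^*,I_m^*,I_s^* )$ with $S^*=\frac{\mu+\beta+\rho}{\sigma_m}$, $I_m^*=\frac{\mu(\mathscr{R}_0-1)}{\sigma_m}$, $I_s^*=\frac{\mu\beta(\mathscr{R}_0-1)}{\sigma_m(\mu+r)}$. Let $p=\frac{(\mu+r)\sigma_m\sigma_sC_I}{\mu(\mu\sigma_m+\beta\sigma_s)}$, $q=\frac{\mu\sigma_m}{\mu\sigma_m+\beta\sigma_s}$, and $S_{1,2}^*=\frac{\mu+\beta+\rho}{2\sigma_m}\big\{\mathscr{R}_0-p+q\mp\sqrt{(\mathscr{R}_0-p-q)^2-4pq}\big\}$ (minus sign for $S_1^*$, plus for $S_2^*$), $I_{m_i}^*=\frac{\mu\mathscr{R}_0}{\sigma_m}-\frac{\mu S_i^*}{\mu+\beta+\rho}$, $I_{s_i}^*=\frac{\beta\mathscr{R}_0}{\sigma_m}-\frac{\beta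 S_i^*}{\mu+\beta+\rho}-\frac{rC_I}{\mu}$, $E_i^*=(S_i^*,I_{m_i}^*,I_{s_i}^* )$, $i=1,2$. ''$E_i^*$ exists'' / ''$E_i^*$ is an endemic equilibrium'' means $S_i^*$ is real, $S_i^*>0$, $I_{m_i}^*>0$ and $I_{s_i}^*>C_I$; ''$E^*$ exists'' means $E^*$ is an endemic equilibrium. *)

From Stdlib Require Import Reals.
Open Scope R_scope.

Definition pospart (x : R) : R := Rmax 0 x.

Definition Ttreat (r C_I Is : R) : R := if Rlt_dec Is C_I then r * Is else r * C_I.

(* right-hand sides of system (3) *)
Definition f_S (A sm ss mu C_I S Im Is : R) : R :=
  A - sm * S * Im - ss * S * pospart (Is - C_I) - mu * S.
Definition f_Im (sm ss mu rho beta C_I S Im Is : R) : R :=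
  sm * S * Im + ss * S * pospart (Is - C_I) - (mu + rho + beta) * Im.
Definition f_Is (mu beta r C_I Im Is : R) : R :=
  beta * Im - Ttreat r C_I Is - mu * Is.

Definition is_equilibrium (A sm ss mu rho beta r C_I S Im Is : R) : Prop :=
  f_S A sm ss mu C_I S Im Is = 0 /\
  f_Im sm ss mu rho beta C_I S Im Is = 0 /\
  f_Is mu beta r C_I Im Is = 0.

Definition endemic_eq (A sm ss mu rho beta r C_I S Im Is : R) : Prop :=
  is_equilibrium A sm ss mu rho beta r C_I S Im Is /\ 0 < S /\ 0 < Im /\ 0 < Is.

Definition Rnought (A sm mu rho beta : R) : R := A * sm / (mu * (mu + beta + rho)).

Definition Sstar (sm mu rho beta : R) : R := (mu + beta + rho) / sm.
Definition Imstar (A sm mu rho beta : R) : R := mu * (Rnought A sm mu rho beta - 1) / sm.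
Definition Isstar (A sm mu rho beta r : R) : R :=
  mu * beta * (Rnought A sm mu rho beta - 1) / (sm * (mu + r)).

Definition pp (sm ss mu beta r C_I : R) : R :=
  (mu + r) * sm * ss * C_I / (mu * (mu * sm + beta * ss)).
Definition qq (sm ss mu beta : R) : R := mu * sm / (mu * sm + beta * ss).

Definition disc (A sm ss mu rho beta r C_I : R) : R :=
  let R0v := Rnought A sm mu rho beta in
  let p := pp sm ss mu beta r C_I in
  let q := qq sm ss mu beta in
  (R0v - p - q) ^ 2 - 4 * p * q.

(* S_i^*, i = 1 (minus sign), i = 2 (plus sign); uses sqrt, which is only
   meaningful when disc >= 0 (this realness is part of "E_i^* exists") *)
Definition Si (i : nat) (A sm ss mu rho beta r C_I : R) : R :=
  let R0v := Rnought A sm mu rho beta in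
  let p := pp sm ss mu beta r C_I in
  let q := qq sm ss mu beta in
  let sg := if Nat.eqb i 1 then -1 else 1 in
  (mu + beta + rho) / (2 * sm) *
    (R0v - p + q + sg * sqrt (disc A sm ss mu rho beta r C_I)).

Definition Imi (i : nat) (A sm ss mu rho beta r C_I : R) : R :=
  mu * Rnought A sm mu rho beta / sm - mu * Si i A sm ss mu rho beta r C_I / (mu + beta + rho).

Definition Isi (i : nat) (A sm ss mu rho beta r C_I : R) : R :=
  beta * Rnought A sm mu rho beta / sm - beta * Si i A sm ss mu rho beta r C_I / (mu + beta + rho)
  - r * C_I / mu.

(* "E_i^* exists" / "E_i^* is an endemic equilibrium" as defined in the paper:
   S_i^* real, S_i^* > 0, I_{m_i}^* > 0, I_{s_i}^* > C_I *)
Definition Ei_exists (i : nat) (A sm ss mu rho beta r C_I : R) : Prop :=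
  0 <= disc A sm ss mu rho beta r C_I /\
  0 < Si i A sm ss mu rho beta r C_I /\
  0 < Imi i A sm ss mu rho beta r C_I /\
  C_I < Isi i A sm ss mu rho beta r C_I.

From Pilot Require Import Defs.
From Stdlib Require Import Reals Lra Psatz.
Open Scope R_scope.

(* Writing x = sm S / (mu + beta + rho) and k = K - 1, an endemic equilibrium with
   I_s > C_I is a root of x^2 - (R0 - p + q) x + q R0 with 0 < x < R0 - k, while one
   with I_s <= C_I must be E*, which is endemic iff 1 < R0 <= K.  Because
   p = k (1 - q), the quadratic takes the value q k (K - R0) at R0 - k, so the sign
   of K - R0 decides whether R0 - k separates the two roots.  The bound on C_I is
   equivalent to sqrt p + sqrt q <= 1, which in each case with R0 <= K puts the
   vertex below R0 - k, so that both roots are then admissible. *)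

Definition lower_root (b D : R) : R := (b - sqrt D) / 2.
Definition upper_root (b D : R) : R := (b + sqrt D) / 2.

Section MonicQuadratic.

Variables b c D : R.
Hypothesis hD : D = b ^ 2 - 4 * c.

Lemma lower_root_add_upper_root : lower_root b D + upper_root b D = b.
Proof. unfold lower_root, upper_root; field. Qed.

Lemma lower_root_le_upper_root : lower_root b D <= upper_root b D.
Proof. unfold lower_root, upper_root; pose proof (sqrt_pos D); lra. Qed.

Lemma monic_quadratic_factor (x : R) : 0 <= D ->
  x ^ 2 - b * x + c = (x - lower_root b D) * (x - upper_root b D).
Proof.
intros hD0; unfold lower_root, upper_root.
replace ((x - (b - sqrt D) / 2) * (x - (b + sqrt D) / 2))
  with (x ^ 2 - b * x + (b ^ 2 - sqrt D * sqrt D) / 4) by field.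
rewrite sqrt_sqrt, hD by exact hD0; field.
Qed.

Lemma root_eq_lower_or_upper (x : R) : 0 <= D -> x ^ 2 - b * x + c = 0 ->
  x = lower_root b D \/ x = upper_root b D.
Proof.
intros hD0 hx; rewrite monic_quadratic_factor in hx by exact hD0.
destruct (Rmult_integral _ _ hx); [left | right]; lra.
Qed.

Lemma lower_root_pos : 0 <= D -> 0 < b -> 0 < c -> 0 < lower_root b D.
Proof.
intros hD0 hb hc.
pose proof (monic_quadratic_factor 0 hD0); pose proof lower_root_add_upper_root.
destruct (Rlt_or_le 0 (lower_root b D)); [assumption | exfalso].
nra.
Qed.

Lemma disc_nonneg_of_value_nonpos (y : R) : y ^ 2 - b * y + c <= 0 -> 0 <= D.
Proof. intros hy; subst D; pose proof (pow2_ge_0 (2 * y - b)); nra. Qed.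

Lemma upper_root_lt (y : R) : 0 <= D -> 0 < y ^ 2 - b * y + c -> b < 2 * y ->
  upper_root b D < y.
Proof.
intros hD0 hy hby; rewrite monic_quadratic_factor in hy by exact hD0.
assert (lower_root b D < y) by (unfold lower_root; pose proof (sqrt_pos D); lra).
nra.
Qed.

Lemma roots_separate (y : R) : y ^ 2 - b * y + c < 0 ->
  lower_root b D < y < upper_root b D.
Proof.
intros hy.
assert (hD0 : 0 <= D) by (apply (disc_nonneg_of_value_nonpos y); lra).
rewrite monic_quadratic_factor in hy by exact hD0.
pose proof lower_root_le_upper_root; nra.
Qed.

Lemma upper_root_eq (y : R) : y ^ 2 - b * y + c = 0 -> b <= 2 * y ->
  upper_root b D = y.
Proof.
intros hy hby.
assert (hsq : D = (2 * y - b) ^ 2) by (subst D; nra).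
unfold upper_root; rewrite hsq, sqrt_pow2 by lra; field.
Qed.

End MonicQuadratic.

Lemma sqrt_add_sqrt_le_one (a s w : R) : 0 <= a -> 0 <= s -> 0 < w ->
  a <= (w - s) ^ 2 -> s <= w -> sqrt (a / w ^ 2) + sqrt (s ^ 2 / w ^ 2) <= 1.
Proof.
intros ha hs hw haw hsw.
assert (hw2 : 0 < w ^ 2) by nra.
rewrite !sqrt_div by (lra || nra).
rewrite !sqrt_pow2 by lra.
assert (sqrt a <= w - s) by (rewrite <- (sqrt_pow2 (w - s)) by lra; apply sqrt_le_1_alt; lra).
apply (Rmult_le_reg_r w); [exact hw|].
field_simplify; lra.
Qed.

Lemma threshold_bound (k q : R) : 0 <= k -> 0 <= q < 1 ->
  sqrt (k * (1 - q)) + sqrt q <= 1 -> k * (1 + q) + q <= 1.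
Proof.
intros hk hq hsum.
set (P := sqrt (k * (1 - q))) in *; set (Q := sqrt q) in *.
assert (hP2 : P ^ 2 = k * (1 - Q ^ 2)) by (unfold P, Q; rewrite !pow2_sqrt; nra).
assert (hQ2 : Q ^ 2 = q) by (apply pow2_sqrt; lra).
assert (0 <= P) by apply sqrt_pos; assert (0 <= Q) by apply sqrt_pos.
assert (hQ1 : Q < 1) by nra.
assert (k * (1 + Q) <= 1 - Q).
{ assert (k * (1 + Q) * (1 - Q) <= (1 - Q) * (1 - Q)) by nra. nra. }
rewrite <- hQ2; nra.
Qed.

Lemma disc_nonneg_of_sqrt_sum_le (p q x : R) : 0 <= p -> 0 <= q ->
  (sqrt p + sqrt q) ^ 2 <= x -> 0 <= (x - p - q) ^ 2 - 4 * p * q.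
Proof.
intros hp hq hx.
rewrite <- (pow2_sqrt p), <- (pow2_sqrt q) by assumption.
pose proof (sqrt_pos p); pose proof (sqrt_pos q).
set (z := x - sqrt p ^ 2 - sqrt q ^ 2).
assert (2 * sqrt p * sqrt q <= z) by (unfold z; lra).
assert (0 <= 2 * sqrt p * sqrt q) by nra.
assert (0 <= (z - 2 * sqrt p * sqrt q) * (z + 2 * sqrt p * sqrt q)) by (apply Rmult_le_pos; lra).
nra.
Qed.

Lemma vertex_below (k q x : R) : 0 < k -> 0 < q -> k * (1 + q) + q <= 1 ->
  (sqrt (k * (1 - q)) + sqrt q) ^ 2 <= x -> q * (k + 1) < x - k.
Proof.
intros hk hq hkq hx.
set (P := sqrt (k * (1 - q))) in *; set (Q := sqrt q) in *.
assert (hP2 : P ^ 2 = k * (1 - q)) by (apply pow2_sqrt; nra).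
assert (hQ2 : Q ^ 2 = q) by (apply pow2_sqrt; lra).
assert (0 <= P) by apply sqrt_pos; assert (0 <= Q) by apply sqrt_pos.
assert (k * Q < P) by nra.
nra.
Qed.

Lemma pospart_of_nonpos (x : R) : x <= 0 -> pospart x = 0.
Proof. intros; apply Rmax_left; lra. Qed.

Lemma pospart_of_nonneg (x : R) : 0 <= x -> pospart x = x.
Proof. intros; apply Rmax_right; lra. Qed.

Lemma Ttreat_of_le (r C Is : R) : Is <= C -> Ttreat r C Is = r * Is.
Proof.
intros; unfold Ttreat; destruct (Rlt_dec Is C); [reflexivity |].
replace Is with C by lra; reflexivity.
Qed.

Lemma Ttreat_of_ge (r C Is : R) : C <= Is -> Ttreat r C Is = r * C.
Proof. intros; unfold Ttreat; destruct (Rlt_dec Is C); [lra | reflexivity]. Qed.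

Section Model.

Variables A sm ss mu rho beta r C_I : R.
Hypotheses (hsm : 0 < sm) (hss : 0 < ss) (hmu : 0 < mu)
  (hrho : 0 < rho) (hbeta : 0 < beta) (hr : 0 < r) (hC : 0 < C_I).

Let R0 := Rnought A sm mu rho beta.
Let k := sm * (mu + r) * C_I / (mu * beta).
Let p := pp sm ss mu beta r C_I.
Let q := qq sm ss mu beta.
Let b := R0 - p + q.
Let D := Defs.disc A sm ss mu rho beta r C_I.
Let Estar_endemic := endemic_eq A sm ss mu rho beta r C_I
  (Sstar sm mu rho beta) (Imstar A sm mu rho beta) (Isstar A sm mu rho beta r).

Lemma k_pos : 0 < k.
Proof. unfold k; apply Rdiv_lt_0_compat; repeat apply Rmult_lt_0_compat; lra. Qed.

Lemma qq_pos : 0 < q.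
Proof. unfold q, qq; apply Rdiv_lt_0_compat; nra. Qed.

Lemma qq_lt_1 : q < 1.
Proof.
unfold q, qq; apply (Rmult_lt_reg_r (mu * sm + beta * ss)); [nra|].
unfold Rdiv; rewrite Rmult_assoc, Rinv_l by nra; nra.
Qed.

Lemma pp_eq : p = k * (1 - q).
Proof. unfold p, q, k, pp, qq; field; repeat split; nra. Qed.

Lemma A_eq : A = R0 * mu * (mu + beta + rho) / sm.
Proof. unfold R0, Rnought; field; repeat split; lra. Qed.

Lemma disc_eq : D = b ^ 2 - 4 * (q * R0).
Proof. unfold D, Defs.disc, b; cbv zeta; fold R0 p q; ring. Qed.

Lemma Si_1_eq :
  Si 1 A sm ss mu rho beta r C_I = (mu + beta + rho) / sm * lower_root b D.
Proof. unfold Si, lower_root; simpl; fold R0 p q D; unfold b; field; lra. Qed.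

Lemma Si_2_eq :
  Si 2 A sm ss mu rho beta r C_I = (mu + beta + rho) / sm * upper_root b D.
Proof. unfold Si, upper_root; simpl; fold R0 p q D; unfold b; field; lra. Qed.

Lemma Imi_eq (i : nat) (x : R) :
  Si i A sm ss mu rho beta r C_I = (mu + beta + rho) / sm * x ->
  Imi i A sm ss mu rho beta r C_I = mu / sm * (R0 - x).
Proof. intros hS; unfold Imi; rewrite hS; fold R0; field; lra. Qed.

Lemma Isi_sub_eq (i : nat) (x : R) :
  Si i A sm ss mu rho beta r C_I = (mu + beta + rho) / sm * x ->
  Isi i A sm ss mu rho beta r C_I - C_I = beta / sm * (R0 - k - x).
Proof. intros hS; unfold Isi; rewrite hS; fold R0; unfold k; field; lra. Qed.

Lemma Ei_exists_iff (i : nat) (x : R) :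
  Si i A sm ss mu rho beta r C_I = (mu + beta + rho) / sm * x ->
  Ei_exists i A sm ss mu rho beta r C_I <-> 0 <= D /\ 0 < x /\ x < R0 - k.
Proof.
intros hS; unfold Ei_exists; rewrite (Imi_eq i x hS).
pose proof (Isi_sub_eq i x hS); rewrite hS; fold D.
assert (0 < (mu + beta + rho) / sm) by (apply Rdiv_lt_0_compat; lra).
assert (0 < mu / sm) by (apply Rdiv_lt_0_compat; lra).
assert (0 < beta / sm) by (apply Rdiv_lt_0_compat; lra).
pose proof k_pos.
split.
- intros (hD & hSpos & hIm & hIs); repeat split; [assumption | nra | nra].
- intros (hD & hx & hxy); repeat split; [assumption | nra | nra | nra].
Qed.

Lemma Isstar_sub_eq :
  Isstar A sm mu rho beta r - C_I = mu * beta / (sm * (mu + r)) * (R0 - (1 + k)).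
Proof. unfold Isstar, k; fold R0; field; repeat split; lra. Qed.

Lemma Isstar_le_iff : Isstar A sm mu rho beta r <= C_I <-> R0 <= 1 + k.
Proof.
pose proof Isstar_sub_eq.
assert (0 < mu * beta / (sm * (mu + r))) by (apply Rdiv_lt_0_compat; nra).
split; intros; nra.
Qed.

Lemma Estar_endemic_of_R0 : 1 < R0 <= 1 + k -> Estar_endemic.
Proof.
intros [hR1 hRk]; apply Isstar_le_iff in hRk.
unfold Estar_endemic, endemic_eq, is_equilibrium, f_S, f_Im, f_Is.
rewrite pospart_of_nonpos, Ttreat_of_le by lra.
unfold Sstar, Imstar, Isstar; fold R0.
repeat split.
- rewrite A_eq; field; lra.
- field; lra.
- field; lra.
- apply Rdiv_lt_0_compat; lra.
- apply Rdiv_lt_0_compat; nra.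
- apply Rdiv_lt_0_compat; [apply Rmult_lt_0_compat; [nra | lra] | nra].
Qed.

Lemma Estar_not_endemic_of_R0 : R0 <= 1 -> ~ Estar_endemic.
Proof.
intros hR1 (_ & _ & hIm & _); unfold Imstar in hIm; fold R0 in hIm.
assert (0 < mu * (R0 - 1)) by (apply (Rdiv_pos_cases _ sm) in hIm; nra).
nra.
Qed.

Lemma endemic_eq_Estar_of_le (S Im Is : R) :
  endemic_eq A sm ss mu rho beta r C_I S Im Is -> Is <= C_I ->
  S = Sstar sm mu rho beta /\ Im = Imstar A sm mu rho beta /\
  Is = Isstar A sm mu rho beta r.
Proof.
intros ((eS & eIm & eIs) & hS & hIm & hIs) hle.
unfold f_S, f_Im, f_Is in *.
rewrite pospart_of_nonpos in eS, eIm by lra; rewrite Ttreat_of_le in eIs by lra.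
assert (hSstar : S = Sstar sm mu rho beta).
{ assert (hfac : Im * (sm * S - (mu + beta + rho)) = 0) by (rewrite <- eIm; ring).
  destruct (Rmult_integral _ _ hfac); [lra|].
  unfold Sstar; field_simplify_eq; lra. }
assert (hImstar : Im = Imstar A sm mu rho beta).
{ assert (hfac : (mu + beta + rho) * (Imstar A sm mu rho beta - Im)
                 = A - sm * S * Im - ss * S * 0 - mu * S).
  { unfold Imstar; fold R0; rewrite hSstar, A_eq; unfold Sstar; field; lra. }
  destruct (Rmult_integral _ _ (eq_trans hfac eS)); lra. }
assert (hfac : (mu + r) * (Isstar A sm mu rho beta r - Is) = beta * Im - r * Is - mu * Is).
{ rewrite hImstar; unfold Isstar, Imstar; field; lra. }
destruct (Rmult_integral _ _ (eq_trans hfac eIs)); repeat split; lra.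
Qed.

Lemma endemic_eq_quadratic_of_gt (S Im Is : R) :
  endemic_eq A sm ss mu rho beta r C_I S Im Is -> C_I < Is ->
  let x := sm * S / (mu + beta + rho) in
  x ^ 2 - b * x + q * R0 = 0 /\ Im = mu / sm * (R0 - x) /\
  Is - C_I = beta / sm * (R0 - k - x).
Proof.
intros ((eS & eIm & eIs) & hS & hIm & hIs) hlt x.
unfold f_S, f_Im, f_Is in *.
rewrite pospart_of_nonneg in eS, eIm by lra; rewrite Ttreat_of_ge in eIs by lra.
assert (hSx : S = (mu + beta + rho) / sm * x) by (unfold x; field; lra).
assert (hImx : Im = mu / sm * (R0 - x)).
{ assert (hfac : (mu + beta + rho) * (mu / sm * (R0 - x) - Im)
                 = (A - sm * S * Im - ss * S * (Is - C_I) - mu * S)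
                   + (sm * S * Im + ss * S * (Is - C_I) - (mu + rho + beta) * Im)).
  { rewrite hSx, A_eq; field; lra. }
  rewrite eS, eIm, Rplus_0_r in hfac.
  destruct (Rmult_integral _ _ hfac); lra. }
assert (hIsx : Is - C_I = beta / sm * (R0 - k - x)).
{ apply (Rmult_eq_reg_l mu); [|lra].
  replace (mu * (Is - C_I)) with (beta * Im - r * C_I - mu * C_I) by lra.
  rewrite hImx; unfold k; field; lra. }
repeat split; [| exact hImx | exact hIsx].
assert (hfac : - ((mu + beta + rho) / sm * ((mu * sm + beta * ss) / sm))
                 * (x ^ 2 - b * x + q * R0)
               = sm * S * Im + ss * S * (Is - C_I) - (mu + rho + beta) * Im).
{ rewrite hIsx, hImx, hSx; unfold b, p, q, pp, qq, k; field; repeat split; nra. }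
rewrite eIm in hfac.
destruct (Rmult_integral _ _ hfac) as [hzero | hzero]; [exfalso | exact hzero].
assert (0 < (mu + beta + rho) / sm * ((mu * sm + beta * ss) / sm))
  by (apply Rmult_lt_0_compat; apply Rdiv_lt_0_compat; nra).
lra.
Qed.

Lemma disc_unfold : D = (R0 - p - q) ^ 2 - 4 * p * q.
Proof. reflexivity. Qed.

Lemma b_eq : b = (R0 - k) + q * (k + 1).
Proof. unfold b; rewrite pp_eq; ring. Qed.

Lemma value_at_threshold :
  (R0 - k) ^ 2 - b * (R0 - k) + q * R0 = q * k * (1 + k - R0).
Proof. rewrite b_eq; ring. Qed.

Lemma roots_separate_of_gt : 1 + k < R0 ->
  0 <= D /\ lower_root b D < R0 - k < upper_root b D.
Proof.
intros hR.
assert (hval : (R0 - k) ^ 2 - b * (R0 - k) + q * R0 < 0).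
{ rewrite value_at_threshold.
  assert (0 < q * k) by (apply Rmult_lt_0_compat; [exact qq_pos | exact k_pos]).
  nra. }
split; [apply (disc_nonneg_of_value_nonpos b (q * R0) D disc_eq (R0 - k)); lra |].
exact (roots_separate b (q * R0) D disc_eq (R0 - k) hval).
Qed.

Lemma Ei_1_exists_of_gt : 1 + k < R0 -> Ei_exists 1 A sm ss mu rho beta r C_I.
Proof.
intros hR; destruct (roots_separate_of_gt hR) as (hD & hsep).
pose proof k_pos; pose proof qq_pos; pose proof b_eq.
assert (0 < lower_root b D)
  by (apply (lower_root_pos b (q * R0)); [exact disc_eq | exact hD | nra | nra]).
apply (Ei_exists_iff 1 _ Si_1_eq); repeat split; lra.
Qed.

Lemma endemic_eq_E1_of_gt (S Im Is : R) : 1 + k < R0 ->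
  endemic_eq A sm ss mu rho beta r C_I S Im Is ->
  S = Si 1 A sm ss mu rho beta r C_I /\ Im = Imi 1 A sm ss mu rho beta r C_I /\
  Is = Isi 1 A sm ss mu rho beta r C_I.
Proof.
intros hR hE.
assert (hIs : C_I < Is).
{ destruct (Rlt_or_le C_I Is) as [| hle]; [assumption | exfalso].
  destruct (endemic_eq_Estar_of_le S Im Is hE hle) as (_ & _ & hIstar).
  rewrite hIstar in hle; apply Isstar_le_iff in hle; lra. }
destruct (endemic_eq_quadratic_of_gt S Im Is hE hIs) as (hroot & hIm & hIsx).
set (x := sm * S / (mu + beta + rho)) in *.
destruct (roots_separate_of_gt hR) as (hD & hsep).
assert (hxy : x < R0 - k) by (assert (0 < beta / sm) by (apply Rdiv_lt_0_compat; lra); nra).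
assert (hx1 : x = lower_root b D)
  by (destruct (root_eq_lower_or_upper b (q * R0) D disc_eq x hD hroot); lra).
assert (hS : S = Si 1 A sm ss mu rho beta r C_I)
  by (rewrite Si_1_eq, <- hx1; unfold x; field; lra).
pose proof (Isi_sub_eq 1 _ Si_1_eq) as hIsi; rewrite <- hx1 in hIsi.
rewrite (Imi_eq 1 _ Si_1_eq), <- hx1.
repeat split; [exact hS | exact hIm | lra].
Qed.

Lemma sqrt_pp_add_sqrt_qq_le_1 :
  C_I <= mu ^ 2 / (mu + r) * (sqrt (beta / (mu * sm) + 1 / ss) - sqrt (1 / ss)) ^ 2 ->
  sqrt p + sqrt q <= 1.
Proof.
intros hC2.
assert (0 < 1 / ss) by (apply Rdiv_lt_0_compat; lra).
assert (0 < beta / (mu * sm)) by (apply Rdiv_lt_0_compat; nra).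
set (w := sqrt (beta / (mu * sm) + 1 / ss)) in *; set (s := sqrt (1 / ss)) in *.
assert (hw2 : w ^ 2 = beta / (mu * sm) + 1 / ss) by (apply pow2_sqrt; lra).
assert (hs2 : s ^ 2 = 1 / ss) by (apply pow2_sqrt; lra).
assert (hp : p = (mu + r) * C_I / mu ^ 2 / w ^ 2)
  by (rewrite hw2; unfold p, pp; field; repeat split; nra).
assert (hq : q = s ^ 2 / w ^ 2)
  by (rewrite hw2, hs2; unfold q, qq; field; repeat split; nra).
rewrite hp, hq; apply sqrt_add_sqrt_le_one.
- apply Rlt_le, Rdiv_lt_0_compat; nra.
- apply sqrt_pos.
- apply sqrt_lt_R0; lra.
- apply (Rmult_le_compat_l ((mu + r) / mu ^ 2)) in hC2; [| apply Rlt_le, Rdiv_lt_0_compat; nra].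
  replace ((mu + r) / mu ^ 2 * (mu ^ 2 / (mu + r) * (w - s) ^ 2)) with ((w - s) ^ 2) in hC2
    by (field; split; nra).
  replace ((mu + r) * C_I / mu ^ 2) with ((mu + r) / mu ^ 2 * C_I) by (field; lra).
  exact hC2.
- apply sqrt_le_1_alt; lra.
Qed.

Section UnderRootCondition.

Hypothesis hsqrt : sqrt p + sqrt q <= 1.

Lemma threshold_bound_pp_qq : k * (1 + q) + q <= 1.
Proof.
pose proof k_pos; pose proof qq_pos; pose proof qq_lt_1.
apply threshold_bound; [lra | lra | rewrite <- pp_eq; exact hsqrt].
Qed.

Lemma both_Ei_exist : 0 <= D -> b < 2 * (R0 - k) -> R0 < 1 + k ->
  Ei_exists 1 A sm ss mu rho beta r C_I /\ Ei_exists 2 A sm ss mu rho beta r C_I.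
Proof.
intros hD hb hR.
pose proof k_pos; pose proof qq_pos; pose proof b_eq.
assert (hval : 0 < (R0 - k) ^ 2 - b * (R0 - k) + q * R0)
  by (rewrite value_at_threshold; apply Rmult_lt_0_compat; nra).
pose proof (upper_root_lt b (q * R0) D disc_eq (R0 - k) hD hval hb).
assert (0 < lower_root b D)
  by (apply (lower_root_pos b (q * R0)); [exact disc_eq | exact hD | nra | nra]).
pose proof (lower_root_le_upper_root b D).
split; [apply (Ei_exists_iff 1 _ Si_1_eq) | apply (Ei_exists_iff 2 _ Si_2_eq)];
  repeat split; lra.
Qed.

Lemma equilibria_of_R0_le_1 : (sqrt p + sqrt q) ^ 2 <= R0 <= 1 ->
  ~ Estar_endemic /\ Ei_exists 1 A sm ss mu rho beta r C_I /\
  Ei_exists 2 A sm ss mu rho beta r C_I.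
Proof.
intros [hlow hR].
pose proof k_pos; pose proof qq_pos; pose proof b_eq.
assert (hp : 0 <= p) by (rewrite pp_eq; pose proof qq_lt_1; nra).
assert (hD : 0 <= D) by (rewrite disc_unfold; apply disc_nonneg_of_sqrt_sum_le; lra).
assert (q * (k + 1) < R0 - k).
{ apply vertex_below; [lra | lra | exact threshold_bound_pp_qq | rewrite <- pp_eq; exact hlow]. }
split; [exact (Estar_not_endemic_of_R0 hR) | apply both_Ei_exist; lra].
Qed.

Lemma equilibria_of_R0_between : 1 < R0 < 1 + k ->
  Estar_endemic /\ Ei_exists 1 A sm ss mu rho beta r C_I /\
  Ei_exists 2 A sm ss mu rho beta r C_I.
Proof.
intros hR.
pose proof k_pos; pose proof qq_pos; pose proof b_eq; pose proof threshold_bound_pp_qq.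
assert (hp : 0 <= p) by (rewrite pp_eq; pose proof qq_lt_1; nra).
assert (hsum : (sqrt p + sqrt q) ^ 2 <= R0).
{ pose proof (sqrt_pos p); pose proof (sqrt_pos q); nra. }
assert (hD : 0 <= D) by (rewrite disc_unfold; apply disc_nonneg_of_sqrt_sum_le; lra).
split; [apply Estar_endemic_of_R0; lra | apply both_Ei_exist; lra].
Qed.

Lemma equilibria_of_R0_eq : R0 = 1 + k ->
  Estar_endemic /\ Ei_exists 1 A sm ss mu rho beta r C_I /\
  ~ Ei_exists 2 A sm ss mu rho beta r C_I.
Proof.
intros hR.
pose proof k_pos; pose proof qq_pos; pose proof b_eq; pose proof threshold_bound_pp_qq.
assert (hval : (R0 - k) ^ 2 - b * (R0 - k) + q * R0 = 0)
  by (rewrite value_at_threshold, hR; ring).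
assert (hD : 0 <= D)
  by (apply (disc_nonneg_of_value_nonpos b (q * R0) D disc_eq (R0 - k)); lra).
assert (hx2 : upper_root b D = R0 - k)
  by (apply (upper_root_eq b (q * R0)); [exact disc_eq | exact hval | nra]).
pose proof (lower_root_add_upper_root b D).
split; [apply Estar_endemic_of_R0; lra | split].
- apply (Ei_exists_iff 1 _ Si_1_eq); repeat split; nra.
- rewrite (Ei_exists_iff 2 _ Si_2_eq); lra.
Qed.

End UnderRootCondition.

End Model.

Theorem theorem2p3 (A sm ss mu rho beta r C_I : R)
  (hA : 0 < A) (hsm : 0 < sm) (hss : 0 < ss) (hmu : 0 < mu) (hrho : 0 < rho)
  (hbeta : 0 < beta) (hr : 0 < r) (hC : 0 < C_I)
  (h1 : Rnought A sm mu rho beta > sm * (mu + r) * C_I / (mu * beta))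
  (h2 : C_I <= mu ^ 2 / (mu + r) *
               (sqrt (beta / (mu * sm) + 1 / ss) - sqrt (1 / ss)) ^ 2) :
  let R0v := Rnought A sm mu rho beta in
  let p := pp sm ss mu beta r C_I in
  let q := qq sm ss mu beta in
  let K := 1 + sm * (mu + r) / (mu * beta) * C_I in
  let EstarEndemic :=
    endemic_eq A sm ss mu rho beta r C_I
      (Sstar sm mu rho beta) (Imstar A sm mu rho beta) (Isstar A sm mu rho beta r) in
  ((sqrt p + sqrt q) ^ 2 <= R0v <= 1 ->
     ~ EstarEndemic /\ Ei_exists 1 A sm ss mu rho beta r C_I
                    /\ Ei_exists 2 A sm ss mu rho beta r C_I) /\
  (1 < R0v < K ->
     EstarEndemic /\ Ei_exists 1 A sm ss mu rho beta r C_I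
                  /\ Ei_exists 2 A sm ss mu rho beta r C_I) /\
  (R0v = K ->
     EstarEndemic /\ Ei_exists 1 A sm ss mu rho beta r C_I
                  /\ ~ Ei_exists 2 A sm ss mu rho beta r C_I) /\
  (R0v > K ->
     Ei_exists 1 A sm ss mu rho beta r C_I /\
     forall S Im Is, endemic_eq A sm ss mu rho beta r C_I S Im Is ->
       S = Si 1 A sm ss mu rho beta r C_I /\
       Im = Imi 1 A sm ss mu rho beta r C_I /\
       Is = Isi 1 A sm ss mu rho beta r C_I).
Proof.
(* [hA] and [h1] are not needed: every case hypothesis already forces R0 > k > 0. *)
intros R0v p q K EstarEndemic.
pose proof (sqrt_pp_add_sqrt_qq_le_1 sm ss mu beta r C_I hsm hss hmu hbeta hr hC h2) as hsqrt.
replace K with (1 + sm * (mu + r) * C_I / (mu * beta)) by (unfold K; field; lra).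
split; [| split; [| split]].
- apply equilibria_of_R0_le_1; assumption.
- apply equilibria_of_R0_between; assumption.
- apply equilibria_of_R0_eq; assumption.
- intros hR; split.
  + apply Ei_1_exists_of_gt; assumption.
  + intros S Im Is; apply endemic_eq_E1_of_gt; assumption.
Qed.
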